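(* Let $V$ be an amenable collection of vectors subordinate to a $\mathbb{Q}$-nef partition $E_1,\dots,E_{k+1}$ of a complete fan $\Sigma$ with functions $\varphi_1,\dots,\varphi_{k+1}$. Let $C$ be a minimal cone of $\Sigma$ such that $C\cap M_V$ is $1$-dimensional. Then there is a point $\rho\in C\cap M_V\cap M$ with $\varphi_{k+1}(\rho)=1$.
   Context: $M$ lattice of rank $n$, $N=\mathrm{Hom}(M,\mathbb{Z})$; $\Sigma$ complete fan of strictly convex rational cones in $M_\mathbb{R}$, $\Sigma[1]$ primitive ray generators. $\mathbb{Q}$-nef partition: ordered partition $\Sigma[1]=E_1\sqcup\dots\sqcup E_{k+1}$ with convex functions $\varphi_i(v)=\max_C\langle u_{i,C},v\rangle$ ($u_{i,C}\in N\otimes\mathbb{Q}$, $C$ maximal cones), linear on each cone of $\Sigma$, with $\varphi_i(\rho)=\delta_{ij}$ for $\rho\in E_j$. Amenable collection: $V=\{v_1,\dots,v_k\}\subset N$ with $\langle v_i,\rho\rangle=-1$ on $E_i$, $\ge0$ on $E_j$ for $i<j\le k+1$, $=0$ on $E_j$ for $j<i$. $M_V=\{u\in M_\mathbb{R}:\langle v_i,u\rangle=0\ \forall i\}$. *)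

From HB Require Import structures.
From mathcomp Require Import all_boot all_order all_algebra.
From mathcomp Require Import reals.
Set Implicit Arguments. Unset Strict Implicit. Unset Printing Implicit Defensive.
Import Order.TTheory GRing.Theory Num.Theory.
Local Open Scope ring_scope.

(* M = Z^n inside M_R = R^n (row vectors); N = Hom(M,Z) is identified with
   Z^n via the dual basis, and N_R with R^n, the pairing being the dot product. *)
Definition pairing (R : realType) (n : nat) (v u : 'rV[R]_n) : R :=
  \sum_(i < n) v ord0 i * u ord0 i.

Definition lattice (R : realType) (n : nat) (u : 'rV[R]_n) : Prop :=
  forall i, u ord0 i \is a Num.int.

Definition rational_vec (R : realType) (n : nat) (u : 'rV[R]_n) : Prop :=
  forall i, exists q : rat, u ord0 i = ratr q.

Definition cone_gen (R : realType) (n : nat) (S : seq 'rV[R]_n) (x : 'rV[R]_n) : Prop :=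
  exists c : 'I_(size S) -> R,
    (forall j, 0 <= c j) /\ x = \sum_(j < size S) c j *: S`_j.

Definition rational_cone (R : realType) (n : nat) (C : 'rV[R]_n -> Prop) : Prop :=
  exists S : seq 'rV[R]_n, (forall j, j \in S -> lattice j) /\
    forall x, C x <-> cone_gen S x.

Definition strictly_convex (R : realType) (n : nat) (C : 'rV[R]_n -> Prop) : Prop :=
  forall x, C x -> C (- x) -> x = 0.

Definition face (R : realType) (n : nat) (F C : 'rV[R]_n -> Prop) : Prop :=
  exists u : 'rV[R]_n, (forall x, C x -> 0 <= pairing u x) /\
    forall x, F x <-> (C x /\ pairing u x = 0).

Definition span_dim (R : realType) (n : nat) (S : 'rV[R]_n -> Prop) (d : nat) : Prop :=
  (exists A : 'M[R]_(d, n), (forall i, S (row i A)) /\ row_free A) /\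
  (forall A : 'M[R]_(d.+1, n), (forall i, S (row i A)) -> ~~ row_free A).

Definition is_fan (R : realType) (n m : nat) (Sigma : 'I_m -> 'rV[R]_n -> Prop) : Prop :=
  [/\ (forall i, rational_cone (Sigma i) /\ strictly_convex (Sigma i)),
      (forall i F, face F (Sigma i) -> exists j, forall x, Sigma j x <-> F x) &
      (forall i j, face (fun x => Sigma i x /\ Sigma j x) (Sigma i) /\
                   face (fun x => Sigma i x /\ Sigma j x) (Sigma j))].

Definition complete_fan (R : realType) (n m : nat) (Sigma : 'I_m -> 'rV[R]_n -> Prop) : Prop :=
  is_fan Sigma /\ forall x, exists i, Sigma i x.

Definition primitive_gen (R : realType) (n : nat) (C : 'rV[R]_n -> Prop) (rho : 'rV[R]_n) : Prop :=
  [/\ C rho, lattice rho, rho != 0 &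
      forall x, C x -> lattice x -> exists k : nat, x = k%:R *: rho].

Definition is_ray (R : realType) (n m : nat) (Sigma : 'I_m -> 'rV[R]_n -> Prop) (rho : 'rV[R]_n) : Prop :=
  exists i, span_dim (Sigma i) 1 /\ primitive_gen (Sigma i) rho.

Definition maximal_cone (R : realType) (n m : nat) (Sigma : 'I_m -> 'rV[R]_n -> Prop) (C : 'I_m) : Prop :=
  forall j, (forall x, Sigma C x -> Sigma j x) -> forall x, Sigma j x -> Sigma C x.

(* Q-nef partition: lab assigns to each ray its block; E_(j+1) = {rho ray | lab rho = j}
   (0-based block indices j : 'I_k.+1); phi i = phi_(i+1), u i C = u_(i+1,C). *)
Definition Qnef_partition (R : realType) (n m k : nat)
  (Sigma : 'I_m -> 'rV[R]_n -> Prop) (lab : 'rV[R]_n -> 'I_k.+1)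
  (phi : 'I_k.+1 -> 'rV[R]_n -> R) (u : 'I_k.+1 -> 'I_m -> 'rV[R]_n) : Prop :=
  [/\ (forall j, exists rho, is_ray Sigma rho /\ lab rho = j),
      (forall i C, maximal_cone Sigma C -> rational_vec (u i C)),
      (forall i x, (exists C, maximal_cone Sigma C /\ phi i x = pairing (u i C) x) /\
                   (forall C, maximal_cone Sigma C -> pairing (u i C) x <= phi i x)),
      (forall i C, exists w : 'rV[R]_n, forall x, Sigma C x -> phi i x = pairing w x) &
      (forall i rho, is_ray Sigma rho -> phi i rho = if lab rho == i then 1 else 0)].

(* amenable collection v_1..v_k (0-based: v i = v_(i+1)) *)
Definition amenable (R : realType) (n m k : nat)
  (Sigma : 'I_m -> 'rV[R]_n -> Prop) (lab : 'rV[R]_n -> 'I_k.+1)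
  (v : 'I_k -> 'rV[R]_n) : Prop :=
  (forall i, lattice (v i)) /\
  forall (i : 'I_k) rho, is_ray Sigma rho ->
    [/\ (nat_of_ord (lab rho) = nat_of_ord i -> pairing (v i) rho = -1),
        ((i < lab rho)%N -> 0 <= pairing (v i) rho) &
        ((lab rho < i)%N -> pairing (v i) rho = 0)].

Definition M_V (R : realType) (n k : nat) (v : 'I_k -> 'rV[R]_n) (x : 'rV[R]_n) : Prop :=
  forall i, pairing (v i) x = 0.

From HB Require Import structures.
From mathcomp Require Import all_boot all_order all_algebra.
From mathcomp Require Import reals.
From mathcomp Require Import ring lra zify.
From Stdlib Require Import Classical.
Import Order.TTheory GRing.Theory Num.Theory.
Local Open Scope ring_scope.
Set Implicit Arguments. Unset Strict Implicit. Unset Printing Implicit Defensive.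

(* By Farkas' lemma, every irredundant generator of a pointed cone spans an exposed face;
   in a fan that face is a ray, so every cone of the fan is generated by the primitive
   generators of its rays.  Hence a nonzero point r of C ∩ M_V is a positive combination
   of rays of C.  As <v_i, r> = 0, the sign conditions of amenability force one of these
   rays into E_(k+1), where phi_(k+1) = 1.  Starting from it and descending through
   j = k, ..., 1, adding <v_j, p> copies of a ray of E_j to the current point p cancels
   <v_j, p> without changing <v_i, p> for i > j or phi_(k+1)(p).  The result is a lattice
   point of C ∩ M_V with phi_(k+1) = 1. *)

Section Pairing.
Variables (R : realType) (n : nat).
Implicit Types (c : R) (v w x : 'rV[R]_n).

Lemma pairingDl v w x : pairing (v + w) x = pairing v x + pairing w x.
Proof. by rewrite /pairing -big_split; apply: eq_bigr => i _; rewrite mxE mulrDl. Qed.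

Lemma pairingDr v w x : pairing v (w + x) = pairing v w + pairing v x.
Proof. by rewrite /pairing -big_split; apply: eq_bigr => i _; rewrite mxE mulrDr. Qed.

Lemma pairingZl c v x : pairing (c *: v) x = c * pairing v x.
Proof. by rewrite /pairing mulr_sumr; apply: eq_bigr => i _; rewrite mxE mulrA. Qed.

Lemma pairingZr c v x : pairing v (c *: x) = c * pairing v x.
Proof. by rewrite /pairing mulr_sumr; apply: eq_bigr => i _; rewrite mxE mulrCA. Qed.

Lemma pairingNl v x : pairing (- v) x = - pairing v x.
Proof. by rewrite -scaleN1r pairingZl mulN1r. Qed.

Lemma pairingNr v x : pairing v (- x) = - pairing v x.
Proof. by rewrite -scaleN1r pairingZr mulN1r. Qed.

Lemma pairingBl v w x : pairing (v - w) x = pairing v x - pairing w x.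
Proof. by rewrite pairingDl pairingNl. Qed.

Lemma pairingBr v w x : pairing v (w - x) = pairing v w - pairing v x.
Proof. by rewrite pairingDr pairingNr. Qed.

Lemma pairing0l x : pairing 0 x = 0.
Proof. by rewrite -(scale0r 0) pairingZl mul0r. Qed.

Lemma pairing0r v : pairing v 0 = 0.
Proof. by rewrite -(scale0r 0) pairingZr mul0r. Qed.

Lemma pairing_self_gt0 x : x != 0 -> 0 < pairing x x.
Proof.
move=> x_neq0; have sq_ge0 i : 0 <= x ord0 i * x ord0 i by rewrite -expr2 sqr_ge0.
rewrite lt_def sumr_ge0 ?andbT // /pairing; apply: contra x_neq0 => /eqP /psumr_eq0P x0.
by apply/eqP/rowP => i; apply/eqP; rewrite mxE -[_ == 0]orbb -mulf_eq0 x0.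
Qed.

End Pairing.

Section Cones.
Variables (R : realType) (n : nat).
Implicit Types (c : R) (L S T : seq 'rV[R]_n) (a b s t u w x y : 'rV[R]_n).

(* [cone_gen] in recursive form (see [cone_genE]), suited to induction on the generators. *)
Fixpoint cone L x : Prop :=
  if L is a :: L' then exists c, 0 <= c /\ cone L' (x - c *: a) else x = 0.

Definition halfline s x : Prop := exists c, 0 <= c /\ x = c *: s.

Lemma halfline_refl s : halfline s s.
Proof. by exists 1; rewrite scale1r. Qed.

Lemma cone0 L : cone L 0.
Proof. by elim: L => //= a L IH; exists 0; rewrite scale0r subr0. Qed.

Lemma coneD L x y : cone L x -> cone L y -> cone L (x + y).
Proof.
elim: L x y => [|a L IH] x y /=; first by move=> -> ->; rewrite addr0.
move=> [c [c0 Lx]] [d [d0 Ly]]; exists (c + d); split; first exact: addr_ge0.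
by have := IH _ _ Lx Ly; rewrite scalerDl opprD addrACA.
Qed.

Lemma coneZ L c x : 0 <= c -> cone L x -> cone L (c *: x).
Proof.
move=> c0; elim: L x => [|a L IH] x /=; first by move->; rewrite scaler0.
move=> [d [d0 Lx]]; exists (c * d); split; first exact: mulr_ge0.
by have := IH _ Lx; rewrite scalerBr scalerA.
Qed.

Lemma cone_mem L t : t \in L -> cone L t.
Proof.
elim: L => [|a L IH] //=; rewrite in_cons => /orP[/eqP->|tL].
  by exists 1; rewrite scale1r subrr; split=> //; apply: cone0.
by exists 0; rewrite scale0r subr0; split=> //; apply: IH.
Qed.

Lemma cone_trans L T x : (forall t, t \in T -> cone L t) -> cone T x -> cone L x.
Proof.
elim: T x => [|a T IH] x LT /=; first by move->; apply: cone0.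
move=> [c [c0 Tx]]; rewrite -(subrK (c *: a) x).
apply: coneD; first by apply: IH => // t tT; apply: LT; rewrite in_cons tT orbT.
by apply: coneZ => //; apply: LT; rewrite mem_head.
Qed.

Lemma cone_halfline L s x : s \in L -> halfline s x -> cone L x.
Proof. by move=> sL [c [c0 ->]]; apply: coneZ => //; apply: cone_mem. Qed.

Lemma cone_rem L s x :
  s \in L -> cone L x <-> exists c, 0 <= c /\ cone (rem s L) (x - c *: s).
Proof.
elim: L x => [|a L IH] x //=; rewrite in_cons.
have [<- _ //|a_neq_s /= sL] := eqVneq a s.
split=> [[c [c0 /(IH _ sL) [d [d0 Ld]]]]|[d [d0 [c [c0 Lc]]]]].
  by exists d; split=> //; exists c; split=> //; rewrite addrAC.
by exists c; split=> //; apply/(IH _ sL); exists d; split=> //; rewrite addrAC.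
Qed.

Lemma cone_genE S x : cone_gen S x <-> cone S x.
Proof.
elim: S x => [|a S IH] x.
  split=> [[c [_ ->]]|/= ->]; first by rewrite big_ord0.
  by exists (fun=> 0); rewrite big_ord0.
split=> [[c [c0 ->]]|/= [c0 [c00 /IH [c [c_ge0 Sc]]]]].
  rewrite big_ord_recl /=; exists (c ord0); split=> //; apply/IH.
  exists (fun j => c (lift ord0 j)); split=> //.
  by rewrite addrAC subrr add0r; apply: eq_bigr => j _; rewrite add0n.
exists (fun j => if unlift ord0 j is Some j' then c j' else c0); split.
  by move=> j; case: (unlift ord0 j).
rewrite big_ord_recl unlift_none /=.
under eq_bigr => j _ do rewrite liftK /= add0n.
by rewrite -Sc addrC subrK.
Qed.

Lemma cone_pairing_ge0 T w x :
  (forall t, t \in T -> 0 <= pairing w t) -> cone T x -> 0 <= pairing w x.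
Proof.
elim: T x => [|a T IH] x wT /=; first by move->; rewrite pairing0r.
move=> [c [c0 Tx]]; rewrite -(subrK (c *: a) x) pairingDr pairingZr.
apply: addr_ge0; first by apply: IH => // t tT; apply: wT; rewrite in_cons tT orbT.
by apply: mulr_ge0 => //; apply: wT; rewrite mem_head.
Qed.

Lemma cone_pairing_eq0 T w x :
  (forall t, t \in T -> pairing w t = 0) -> cone T x -> pairing w x = 0.
Proof.
move=> wT Tx; apply/eqP; rewrite eq_le -oppr_ge0 -pairingNl.
by rewrite !(cone_pairing_ge0 _ Tx) // => t /wT; rewrite ?pairingNl => ->; rewrite ?oppr0.
Qed.

Fixpoint pcone T x : Prop :=
  if T is a :: T' then exists c, 0 < c /\ pcone T' (x - c *: a) else x = 0.

Lemma pcone_cone T x : pcone T x -> cone T x.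
Proof.
by elim: T x => [|a T IH] x //= [c [c0 Tx]]; exists c; split; [exact: ltW|exact: IH].
Qed.

Lemma cone_pcone L x : cone L x -> exists T, {subset T <= L} /\ pcone T x.
Proof.
elim: L x => [|a L IH] x /=; first by move->; exists [::].
move=> [c [c0 /IH [T [TL Tx]]]]; have [c_eq0|c_gt0] := eqVneq c 0.
  exists T; split; first by move=> t /TL; rewrite in_cons orbC => ->.
  by move: Tx; rewrite c_eq0 scale0r subr0.
exists (a :: T); split; last by exists c; rewrite lt_def c_gt0.
by move=> t; rewrite !in_cons => /orP[->|/TL ->]; rewrite ?orbT.
Qed.

Lemma pcone_pairing_eq0 T w x :
  (forall t, t \in T -> 0 <= pairing w t) -> pcone T x -> pairing w x = 0 ->
  forall t, t \in T -> pairing w t = 0.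
Proof.
elim: T x => [|a T IH] x wT //= [c [c0 Tx]].
have wT' t : t \in T -> 0 <= pairing w t by move=> tT; apply: wT; rewrite in_cons tT orbT.
have wy := cone_pairing_ge0 wT' (pcone_cone Tx).
have wa := wT a (mem_head _ _).
rewrite -(subrK (c *: a) x) pairingDr pairingZr => /eqP.
rewrite paddr_eq0 ?mulr_ge0 ?(ltW c0) // mulf_eq0 (gt_eqF c0) => /andP[/eqP wx /eqP wa0].
by move=> t; rewrite in_cons => /orP[/eqP->//|]; exact: (IH _ wT' Tx wx).
Qed.

Lemma cone_pairing_gt0_eq0 T w x :
  (forall t, t \in T -> 0 < pairing w t) -> cone T x -> pairing w x = 0 -> x = 0.
Proof.
move=> wT /cone_pcone [[|t T'] [T'T Tx]] wx //.
have /eqP := pcone_pairing_eq0 (fun s sT' => ltW (wT s (T'T s sT'))) Tx wx (mem_head _ _).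
by rewrite gt_eqF // wT // T'T ?mem_head.
Qed.

Lemma cone_multiples (P : 'rV[R]_n -> Prop) L :
  (forall s, s \in L -> exists t, P t /\ halfline t s) ->
  exists T, (forall t, t \in T -> P t) /\ forall x, cone L x -> cone T x.
Proof.
elim: L => [|a L IH] PL; first by exists [::].
have [t [Pt [d [d0 ->]]]] := PL a (mem_head _ _).
have [|T [PT LT]] := IH; first by move=> s sL; apply: PL; rewrite in_cons sL orbT.
exists (t :: T); split; first by move=> t'; rewrite in_cons => /orP[/eqP->|/PT].
move=> x /= [c [c0 /LT Tx]]; exists (c * d); split; first exact: mulr_ge0.
by rewrite -scalerA.
Qed.

Lemma cone_map_shear L a (p : 'rV[R]_n -> R) c x :
  (forall t, t \in L -> 0 <= p t) ->
  cone [seq p t *: a + c *: t | t <- L] x ->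
  exists y mu, [/\ cone L y, 0 <= mu & x = mu *: a + c *: y].
Proof.
elim: L x => [|t L IH] x pL /=.
  by move->; exists 0, 0; rewrite !scaler0 scale0r addr0; split=> //; apply: cone0.
move=> [d [d0 /IH [|y [mu [Ly mu0 def_x]]]]].
  by move=> t' t'L; apply: pL; rewrite in_cons t'L orbT.
exists (y + d *: t), (mu + d * p t); split.
- by exists d; rewrite addrK.
- by rewrite addr_ge0 // mulr_ge0 // pL ?mem_head.
- move/eqP: def_x; rewrite subr_eq => /eqP->.
  by rewrite !scalerDr !scalerDl !scalerA (mulrC c d) addrACA.
Qed.

(* Fourier-Motzkin elimination: projecting along [a] onto the hyperplane [u = 0]
   removes one generator. *)
Lemma farkas L b :
  cone L b \/ exists u, (forall t, t \in L -> 0 <= pairing u t) /\ pairing u b < 0.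
Proof.
move: {2}(size L) (leqnn (size L)) => N.
elim: N L b => [|N IH] [|a L] b //= sizeL; first last.
- have [Lb|[u [uL ub]]] := IH L b sizeL; first by left; exists 0; rewrite scale0r subr0.
  have [ua_ge0|ua_lt0] := lerP 0 (pairing u a).
    by right; exists u; split=> // t; rewrite in_cons => /orP[/eqP->|/uL].
  have ua_neq0 : - pairing u a != 0 by rewrite oppr_eq0 lt_eqF.
  pose proj x := pairing u x *: a + (- pairing u a) *: x.
  have [|Lb'|[w [wL wb]]] := IH (map proj L) (proj b); first by rewrite size_map.
    have [y [mu [Ly mu0 def_b]]] := cone_map_shear uL Lb'.
    left; exists ((mu - pairing u b) / - pairing u a); split.
      by apply: divr_ge0; lra.
    suff -> : b - (mu - pairing u b) / - pairing u a *: a = y by [].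
    apply: (scalerI ua_neq0); rewrite scalerBr scalerA mulrC divfK //.
    apply: (addrI (mu *: a)); rewrite -def_b /proj scalerBl.
    by apply/rowP => i; rewrite !mxE; ring.
  have pairing_proj x : pairing w (proj x) = pairing (pairing w a *: u - pairing u a *: w) x.
    by rewrite pairingDr !pairingZr pairingBl !pairingZl mulrC mulNr.
  right; exists (pairing w a *: u - pairing u a *: w); split; last by rewrite -pairing_proj.
  move=> t; rewrite in_cons => /orP[/eqP->|tL]; last by rewrite -pairing_proj wL ?map_f.
  by rewrite pairingBl !pairingZl mulrC subrr.
all: have [->|b_neq0] := eqVneq b 0; [by left|right].
all: by exists (- b); rewrite pairingNl oppr_lt0 pairing_self_gt0.
Qed.

Lemma cone_irredundant S :
  exists L, [/\ forall x, cone S x <-> cone L x, {subset L <= S} &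
                forall s, s \in L -> ~ cone (rem s L) s].
Proof.
move: {2}(size S) (leqnn (size S)) => N; elim: N S => [|N IH] S sizeS.
  by case: S sizeS => // _; exists [::].
have [[s [sS Rs]]|irr] := classic (exists s, s \in S /\ cone (rem s S) s); last first.
  by exists S; split=> // s sS Rs; apply: irr; exists s.
have [|L [RL LR irrL]] := IH (rem s S); first by rewrite size_rem //; case: (size S) sizeS.
exists L; split=> // [x|t /LR /mem_rem //]; rewrite -RL; split.
  move/(cone_rem x sS) => [c [c0 Rx]]; rewrite -(subrK (c *: s) x).
  by apply: coneD => //; apply: coneZ.
by apply: cone_trans => t /mem_rem; apply: cone_mem.
Qed.

Section ExposedGenerator.
Variable L : seq 'rV[R]_n.
Hypothesis L_pointed : forall x, cone L x -> cone L (- x) -> x = 0.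
Hypothesis L_irredundant : forall s, s \in L -> ~ cone (rem s L) s.
Variable s : 'rV[R]_n.
Hypothesis sL : s \in L.

Lemma separate_generator t : t \in rem s L ->
  exists u, [/\ forall t', t' \in rem s L -> 0 <= pairing u t', pairing u s = 0 &
                0 < pairing u t].
Proof.
move=> tR; have [[al [al0 [be [be0 Ry]]]]|[u [uS ut]]] :=
  farkas [:: s, - s & rem s L] (- t); last first.
  have us : pairing u s = 0.
    apply/eqP; rewrite eq_le -oppr_ge0 -pairingNr !uS // !in_cons eqxx ?orbT //.
  exists u; split=> // [t' t'R|]; first by rewrite uS // !in_cons t'R !orbT.
  by rewrite -oppr_lt0 -pairingNr.
exfalso; set y := _ - _ in Ry.
have def_t : - t = y + (al - be) *: s by rewrite /y; apply/rowP => i; rewrite !mxE; ring.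
have Ly : cone L y by apply: cone_trans Ry => t' /mem_rem; apply: cone_mem.
have [be_le_al|al_lt_be] := lerP be al.
  have t0 : t = 0.
    apply: L_pointed; first exact/cone_mem/(mem_rem tR).
    by rewrite def_t; apply: coneD Ly (coneZ _ (cone_mem sL)); rewrite subr_ge0.
  by apply: (L_irredundant (s := 0)); [rewrite -t0 (mem_rem tR)|apply: cone0].
have def_s : s = (be - al)^-1 *: (t + y).
  have : be - al != 0 by rewrite subr_eq0 gt_eqF.
  by rewrite /y => ?; apply/rowP => i; rewrite !mxE; field.
apply: (L_irredundant sL); rewrite [X in cone _ X]def_s.
by apply: coneZ; [rewrite invr_ge0 subr_ge0 ltW|apply: coneD (cone_mem tR) Ry].
Qed.

Lemma separate_generators T : {subset T <= rem s L} ->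
  exists u, [/\ forall t', t' \in rem s L -> 0 <= pairing u t', pairing u s = 0 &
                forall t, t \in T -> 0 < pairing u t].
Proof.
elim: T => [|t T IH] TR; first by exists 0; split=> // [t' _|]; rewrite pairing0l.
have [u1 [u1R u1s u1t]] := separate_generator (TR t (mem_head _ _)).
have [|u2 [u2R u2s u2T]] := IH; first by move=> x xT; apply: TR; rewrite in_cons xT orbT.
exists (u1 + u2); split=> [t' t'R||t']; rewrite pairingDl.
- by rewrite addr_ge0 ?u1R ?u2R.
- by rewrite u1s u2s addr0.
- rewrite in_cons => /orP[/eqP->|t'T].
    by apply: ltr_wpDr => //; apply/u2R/TR/mem_head.
  by apply: ltr_wpDl; [apply/u1R/TR; rewrite in_cons t'T orbT|apply: u2T].
Qed.

Lemma cone_exposed_generator :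
  exists u, (forall x, cone L x -> 0 <= pairing u x) /\
            forall x, cone L x /\ pairing u x = 0 <-> halfline s x.
Proof.
have [u [uR us uR_gt0]] := separate_generators (fun x xR => xR).
exists u; split.
  move=> x /(cone_rem x sL) [c [c0 Rx]].
  rewrite -(subrK (c *: s) x) pairingDr pairingZr us mulr0 addr0.
  exact: cone_pairing_ge0 Rx.
move=> x; split=> [[/(cone_rem x sL) [c [c0 Rx]] ux]|sx].
  exists c; split=> //; apply/eqP; rewrite -subr_eq0; apply/eqP.
  by apply: (cone_pairing_gt0_eq0 uR_gt0 Rx); rewrite pairingBr ux pairingZr us mulr0 subr0.
split; first exact: cone_halfline sx.
by case: sx => c [_ ->]; rewrite pairingZr us mulr0.
Qed.

End ExposedGenerator.

End Cones.

Section Lattice.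
Variables (R : realType) (n : nat).
Implicit Types (c : R) (K S : 'rV[R]_n -> Prop) (s x y : 'rV[R]_n).

Lemma latticeD x y : lattice x -> lattice y -> lattice (x + y).
Proof. by move=> x_lat y_lat i; rewrite mxE rpredD. Qed.

Lemma latticeB x y : lattice x -> lattice y -> lattice (x - y).
Proof. by move=> x_lat y_lat i; rewrite !mxE rpredB. Qed.

Lemma latticeMn (N : nat) x : lattice x -> lattice (N%:R *: x).
Proof. by move=> x_lat i; rewrite mxE rpredM // natr_int. Qed.

Lemma pairing_int x y : lattice x -> lattice y -> pairing x y \is a Num.int.
Proof. by move=> x_lat y_lat; apply: rpred_sum => i _; apply: rpredM. Qed.

Lemma span_dim1_neq0 S : span_dim S 1 -> exists2 r, S r & r != 0.
Proof.
move=> [[A [SA A_free]] _]; exists A; first by rewrite -(row_id ord0 A).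
by apply: contraTneq A_free => ->; rewrite /row_free mxrank0.
Qed.

Lemma halfline_span_dim1 K s : s != 0 -> (forall x, K x <-> halfline s x) -> span_dim K 1.
Proof.
move=> s_neq0 Ks; split.
  exists s; split=> [i|]; first by rewrite row_id; apply/Ks/halfline_refl.
  by rewrite /row_free rank_rV s_neq0.
move=> A KA; have As : (A <= s)%MS.
  by apply/row_subP => i; have [c [_ ->]] := (Ks _).1 (KA i); apply/scalemx_sub/submx_refl.
by apply/negP => /eqP rankA; have := mxrankS As; rewrite rankA rank_rV s_neq0.
Qed.

(* The primitive generator is [k0 / a *: s], where [a = |s_i0|] for a nonzero coordinate
   of [s] and [k0] is the least positive [k] making [k / a *: s] a lattice point. *)
Lemma halfline_primitive_gen K s :
  s != 0 -> lattice s -> (forall x, K x <-> halfline s x) -> exists rho, primitive_gen K rho.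
Proof.
move=> s_neq0 s_lat Ks; have [i0 si0_neq0] : exists i0, s ord0 i0 != 0.
  apply/existsP; apply: contraR s_neq0 => /existsPn s0.
  apply/eqP/rowP => i; rewrite mxE; apply/eqP/negPn/s0.
pose a := `|s ord0 i0|; have a_gt0 : 0 < a by rewrite normr_gt0.
have scale_nat c : 0 <= c -> lattice (c *: s) -> c * a \is a Num.nat.
  move=> c0 cs_lat; rewrite /a -[c]ger0_norm // -normrM natr_norm_int //.
  by have := cs_lat i0; rewrite mxE.
pose P k := (0 < k)%N && [forall i, ((k%:R / a) *: s) ord0 i \is a Num.int].
have exP : exists k, P k.
  have /natrP [N0 aN0] := natr_norm_int (s_lat i0).
  exists N0; rewrite /P -(ltr0n R) -aN0 a_gt0 divff ?gt_eqF // scale1r.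
  exact/forallP.
case: (ex_minnP exP) => k0 /andP[k0_gt0 /forallP rho_lat] k0_min.
pose rho := (k0%:R / a) *: s.
have K_rho : K rho by apply/Ks; exists (k0%:R / a); rewrite divr_ge0 ?ler0n ?ltW.
exists rho; split=> // [|x /Ks [c [c0 ->]] cs_lat].
  by rewrite /rho scaler_eq0 negb_or s_neq0 andbT mulf_neq0 ?invr_eq0 ?gt_eqF ?ltr0n.
have /natrP [q caq] := scale_nat c c0 cs_lat.
have def_c : c = q%:R / a by rewrite -caq mulfK ?gt_eqF.
have def_q := divn_eq q k0.
suff r0 : (q %% k0 = 0)%N.
  by exists (q %/ k0)%N; rewrite def_c /rho scalerA mulrA -natrM {1}def_q r0 addn0.
apply/eqP; apply: contraT; rewrite -lt0n => r_gt0.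
suff /k0_min : P (q %% k0)%N by rewrite leqNgt ltn_pmod.
rewrite /P r_gt0; apply/forallP.
have -> : (q %% k0)%:R / a *: s = c *: s - (q %/ k0)%:R *: rho.
  rewrite def_c /rho scalerA -scalerBl; congr (_ *: _).
  by rewrite {2}def_q natrD natrM; field; rewrite gt_eqF.
exact/latticeB/latticeMn.
Qed.

End Lattice.

Section FanRays.
Variables (R : realType) (n m : nat) (Sigma : 'I_m -> 'rV[R]_n -> Prop).
Hypothesis Sigma_fan : is_fan Sigma.

Lemma fan_generator_ray C L s :
  (forall x, Sigma C x <-> cone L x) -> (forall s, s \in L -> lattice s) ->
  (forall s, s \in L -> ~ cone (rem s L) s) -> s \in L ->
  exists t, (is_ray Sigma t /\ Sigma C t) /\ halfline t s.
Proof.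
move=> CL L_lat L_irr sL; case: Sigma_fan => Sigma_cone Sigma_face _.
have L_pointed x : cone L x -> cone L (- x) -> x = 0.
  by move=> /CL Cx /CL CNx; apply: (Sigma_cone C).2.
have [u [uL u_face]] := cone_exposed_generator L_pointed L_irr sL.
have [j Sj] : exists j, forall x, Sigma j x <-> Sigma C x /\ pairing u x = 0.
  by apply: Sigma_face; exists u; split=> [x /CL|]; [apply: uL|].
have Sj_s x : Sigma j x <-> halfline s x.
  by rewrite -u_face Sj; split=> -[/CL Cx ux].
have s_neq0 : s != 0 by apply/eqP => s0; apply: (L_irr s sL); rewrite s0; apply: cone0.
have [rho rho_prim] := halfline_primitive_gen s_neq0 (L_lat s sL) Sj_s.
case: (rho_prim) => Sj_rho _ _ rho_mult.
have [N ->] := rho_mult s ((Sj_s s).2 (halfline_refl s)) (L_lat s sL).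
exists rho; split; last by exists N%:R; rewrite ler0n.
split; first by exists j; split=> //; apply: halfline_span_dim1 s_neq0 Sj_s.
by have [] := (Sj rho).1 Sj_rho.
Qed.

Lemma fan_cone_rays C :
  exists T, (forall t, t \in T -> is_ray Sigma t /\ Sigma C t) /\
            forall x, Sigma C x <-> cone T x.
Proof.
case: Sigma_fan => Sigma_cone _ _; have [[S [S_lat CS]] _] := Sigma_cone C.
have [L [SL LS L_irr]] := cone_irredundant S.
have CL x : Sigma C x <-> cone L x by rewrite CS cone_genE SL.
have L_lat s : s \in L -> lattice s by move/LS; apply: S_lat.
have [T [T_rays LT]] := cone_multiples (fun s => fan_generator_ray CL L_lat L_irr).
exists T; split=> // x; split=> [/CL/LT //|Tx].
by apply/CL; apply: cone_trans Tx => t /T_rays [_ /CL].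
Qed.

End FanRays.

Section AmenableCombination.
Variables (R : realType) (n k : nat) (lab : 'rV[R]_n -> 'I_k.+1).
Variables (v : 'I_k -> 'rV[R]_n) (w : 'rV[R]_n) (T : seq 'rV[R]_n) (r : 'rV[R]_n).
Hypothesis v_lat : forall i, lattice (v i).
Hypothesis T_lat : forall t, t \in T -> lattice t.
Hypothesis w_T : forall t, t \in T -> pairing w t = if lab t == ord_max then 1 else 0.
Hypothesis v_T : forall (i : 'I_k) t, t \in T ->
  [/\ (nat_of_ord (lab t) = nat_of_ord i -> pairing (v i) t = -1),
      ((i < lab t)%N -> 0 <= pairing (v i) t) &
      ((lab t < i)%N -> pairing (v i) t = 0)].
Hypothesis T_r : pcone T r.
Hypothesis r_neq0 : r != 0.
Hypothesis v_r : forall i, pairing (v i) r = 0.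

Lemma v_T_eq0 (i : 'I_k) :
  (forall t, t \in T -> 0 <= pairing (v i) t) \/ (forall t, t \in T -> pairing (v i) t <= 0) ->
  forall t, t \in T -> pairing (v i) t = 0.
Proof.
case=> [v_ge0|v_le0]; first exact: pcone_pairing_eq0 v_ge0 T_r (v_r i).
move=> t tT; apply: oppr_inj; rewrite oppr0 -pairingNl.
apply: (pcone_pairing_eq0 _ T_r) tT => [s /v_le0|]; rewrite pairingNl ?oppr_ge0 //.
by rewrite v_r oppr0.
Qed.

(* If the largest label [j] occurring in [T] were below [k], the functional [v_j] would be
   nonpositive on [T] and vanish on [r], hence vanish on [T]; but [v_j] is [-1] on label [j]. *)
Lemma top_label_mem : exists2 b, b \in T & lab b = ord_max.
Proof.
have [t0 t0T] : exists t0, t0 \in T.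
  move: T_r; case: T => [/= r0|t0 T' _]; first by move: r_neq0; rewrite r0 eqxx.
  by exists t0; rewrite mem_head.
pose P j := has (fun t => lab t == j :> nat) T.
have exP : exists j, P j by exists (lab t0); apply/hasP; exists t0.
have ubP j : P j -> (j <= k)%N by case/hasP => t _ /eqP <-; rewrite -ltnS.
case: (ex_maxnP exP ubP) => j /hasP [b bT /eqP lab_b] j_max.
exists b => //; apply/val_inj; rewrite /= lab_b.
apply/eqP; rewrite eqn_leq ubP /=; last by apply/hasP; exists b; rewrite // lab_b.
rewrite leqNgt; apply/negP => j_lt_k; pose i := Ordinal j_lt_k.
have v_le0 t : t \in T -> pairing (v i) t <= 0.
  move=> tT; have [eq_i _ lt_i] := v_T i tT.
  have : (lab t <= i)%N by apply: j_max; apply/hasP; exists t.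
  by rewrite leq_eqVlt => /orP[/eqP/eq_i->|/lt_i->]; rewrite ?lerN10.
have [eq_i _ _] := v_T i bT.
by have := v_T_eq0 (or_intror v_le0) bT; rewrite eq_i // => /eqP; rewrite oppr_eq0 oner_eq0.
Qed.

Definition level_point (j : nat) p :=
  [/\ cone [seq t <- T | (j <= lab t)%N] p, lattice p, pairing w p = 1 &
      forall i : 'I_k, (j <= i)%N -> pairing (v i) p = 0].

Lemma level_point_top : exists p, level_point k p.
Proof.
have [b bT lab_b] := top_label_mem; exists b; split.
- by apply: cone_mem; rewrite mem_filter bT lab_b leqnn.
- exact: T_lat.
- by rewrite w_T // lab_b eqxx.
- by move=> i; rewrite leqNgt ltn_ord.
Qed.

(* Going down one level: add [v_j(p)] copies of a ray of label [j], if there is one;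
   otherwise [v_j] vanishes on [T] and [p] already works. *)
Lemma level_point_step (j : 'I_k) p : level_point j.+1 p -> exists p', level_point j p'.
Proof.
move=> [p_T p_lat p_w p_v].
have p_T' : cone [seq t <- T | (j <= lab t)%N] p.
  apply: cone_trans p_T => t; rewrite mem_filter => /andP[jt tT].
  by apply: cone_mem; rewrite mem_filter tT ltnW.
have v_split (i : 'I_k) : (j <= i)%N -> i = j \/ (j < i)%N.
  by rewrite leq_eqVlt => /orP[/eqP ji|]; [left; apply: val_inj|right].
have vj_ge0 : 0 <= pairing (v j) p.
  apply: cone_pairing_ge0 p_T => t; rewrite mem_filter => /andP[jt tT].
  by have [_ ge_j _] := v_T j tT; apply: ge_j.
have /natrP [N vj_p] : pairing (v j) p \is a Num.nat.
  by rewrite natrEint vj_ge0 andbT pairing_int.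
have [/hasP [a aT /eqP lab_a]|/hasPn no_j] := boolP (has (fun t => lab t == j :> nat) T).
  exists (p + N%:R *: a); split.
  - apply/(coneD p_T')/coneZ/cone_mem; first exact: ler0n.
    by rewrite mem_filter aT lab_a leqnn.
  - exact/latticeD/latticeMn/T_lat.
  - by rewrite pairingDr pairingZr p_w w_T // -(inj_eq val_inj) /= lab_a ltn_eqF ?mulr0 ?addr0.
  move=> i /v_split [->|j_lt_i]; rewrite pairingDr pairingZr.
    by have [-> //] := v_T j aT; rewrite vj_p mulrN1 subrr.
  by have [_ _ ->] := v_T i aT; rewrite ?lab_a // p_v // mulr0 addr0.
have vj_T : forall t, t \in T -> pairing (v j) t = 0.
  apply: v_T_eq0; left => t tT; have [_ ge_j lt_j] := v_T j tT.
  by case: ltngtP (no_j t tT) => // [/lt_j ->|/ge_j] //; rewrite eqxx.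
exists p; split=> // i /v_split [->|]; last exact: p_v.
apply: cone_pairing_eq0 p_T => t; rewrite mem_filter => /andP[_]; exact: vj_T.
Qed.

Lemma amenable_combination :
  exists p, [/\ cone T p, lattice p, pairing w p = 1 & forall i, pairing (v i) p = 0].
Proof.
suff [p [p_T p_lat p_w p_v]] : exists p, level_point 0 p.
  exists p; split=> //; last by move=> i; apply: p_v.
  by apply: cone_trans p_T => t; rewrite mem_filter => /andP[_ /cone_mem].
suff /(_ k (leqnn k)) : forall d, (d <= k)%N -> exists p, level_point (k - d) p by rewrite subnn.
elim=> [|d IH] d_le_k; first by rewrite subn0; apply: level_point_top.
have [p p_lev] := IH (ltnW d_le_k).
have kd : (k - d.+1 < k)%N by lia.
by apply: (@level_point_step (Ordinal kd) p); rewrite /= subnSK.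
Qed.

End AmenableCombination.

Theorem proposition2p12 (R : realType) (n m k : nat)
  (Sigma : 'I_m -> 'rV[R]_n -> Prop) (lab : 'rV[R]_n -> 'I_k.+1)
  (phi : 'I_k.+1 -> 'rV[R]_n -> R) (u : 'I_k.+1 -> 'I_m -> 'rV[R]_n)
  (v : 'I_k -> 'rV[R]_n) (C : 'I_m) :
  complete_fan Sigma ->
  Qnef_partition Sigma lab phi u ->
  amenable Sigma lab v ->
  span_dim (fun x => Sigma C x /\ M_V v x) 1 ->
  (forall (C' : 'I_m), span_dim (fun x => Sigma C' x /\ M_V v x) 1 ->
     (forall x, Sigma C' x -> Sigma C x) -> forall x, Sigma C x -> Sigma C' x) ->
  exists rho : 'rV[R]_n,
    [/\ Sigma C rho, M_V v rho, lattice rho & phi ord_max rho = 1].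
Proof.
move=> [Sigma_fan _] [_ _ _ phi_lin phi_ray] [v_lat v_ray].
move=> /span_dim1_neq0 [r [Cr Vr] r_neq0] _.
have [T [T_rays CT]] := fan_cone_rays Sigma_fan C.
have [T' [T'T T'_r]] := cone_pcone ((CT r).1 Cr).
have T'_rays t : t \in T' -> is_ray Sigma t /\ Sigma C t by move/T'T/T_rays.
have [w w_phi] := phi_lin ord_max C.
have T'_lat t : t \in T' -> lattice t by move/T'_rays => [[j [_ []]]].
have w_T' t : t \in T' -> pairing w t = if lab t == ord_max then 1 else 0.
  by move/T'_rays => [t_ray Ct]; rewrite -w_phi // phi_ray.
have v_T' i t (tT' : t \in T') := v_ray i t (T'_rays t tT').1.
have [p [p_T' p_lat p_w p_v]] := amenable_combination v_lat T'_lat w_T' v_T' T'_r r_neq0 Vr.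
have Cp : Sigma C p by apply/CT; apply: cone_trans p_T' => t /T'T /cone_mem.
by exists p; split=> //; rewrite w_phi.
Qed.
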